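(* Let $i\colon A\hookrightarrow X$ be an embedding and $f\colon A\to B$ a morphism in $\mathbf{MetCH_{sep}}$, and let $\iota_B\colon B\to B+X$, $\iota_X\colon X\to B+X$ be the coproduct injections. Define $\gamma\colon (B+X)\times(B+X)\to[0,\infty]$ by: (1) for $b,b'\in B$: $\gamma(\iota_B(b),\iota_B(b'))=d_B(b,b')$; (2) for $x,x'\in X$: $\gamma(\iota_X(x),\iota_X(x'))=\min\big\{d_X(x,x'),\ \inf_{a,a'\in A}\big(d_X(x,i(a))+d_B(f(a),f(a'))+d_X(i(a'),x')\big)\big\}$; (3) for $b\in B$, $x\in X$: $\gamma(\iota_B(b),\iota_X(x))=\inf_{a\in A}\big(d_B(b,f(a))+d_X(i(a),x)\big)$ and $\gamma(\iota_X(x),\iota_B(b))=\inf_{a\in A}\big(d_X(x,i(a))+d_B(f(a),b)\big)$. Then $\gamma$ is a continuous submetric on $B+X$. Moreover, the quotient $(B+X)/{\sim_\gamma}$, together with the maps $B\to(B+X)/{\sim_\gamma}$ and $X\to(B+X)/{\sim_\gamma}$ obtained by composing $\iota_B$ and $\iota_X$ with the projection, is the pushout of $B\xleftarrow{f}A\xrightarrow{i}X$ in $\mathbf{MetCH_{sep}}$.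
   Context: A metric on a set $X$ is a map $d\colon X\times X\to[0,\infty]$ with $d(x,x)=0$ and $d(x,z)\le d(x,y)+d(y,z)$ (not necessarily symmetric, $\infty$ allowed); separated means $d(x,y)=0=d(y,x)$ implies $x=y$. The upper topology on $[0,\infty]$ has as nonempty proper open sets the sets $]u,\infty]$. A separated metric compact Hausdorff space is a compact Hausdorff space with a separated metric continuous as a map $X\times X\to[0,\infty]$ with the upper topology. $\mathbf{MetCH_{sep}}$: these spaces with continuous non-expansive maps ($d_Y(f(x),f(y))\le d_X(x,y)$). An embedding is an injective morphism $f$ with $d_X(x,y)=d_Y(f(x),f(y))$. The coproduct $B+X$ is the disjoint union with coproduct topology and the metric agreeing with $d_B$, $d_X$ on the summands and equal to $\infty$ between points of different summands. A continuous submetric on a separated metric compact Hausdorff space $(Z,d)$ is a (not necessarily separated) metric $\gamma$ on $Z$, continuous $Z\times Z\to[0,\infty]$ for the upper topology, with $\gamma\le d$ pointwise. For such $\gamma$, $\sim_\gamma$ is the equivalence relation $z\sim_\gamma w\iff\gamma(z,w)=\gamma(w,z)=0$, and $Z/{\sim_\gamma}$ is the quotient set with the quotient topology and metric $([z],[w])\mapsto\gamma(z,w)$; the projection $Z\to Z/{\sim_\gamma}$ is a surjective morphism of $\mathbf{MetCH_{sep}}$. *)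

From HB Require Import structures.
From mathcomp Require Import all_boot all_order all_algebra.
From mathcomp Require Import generic_quotient.
From mathcomp Require Import all_classical all_reals all_analysis.

Set Implicit Arguments.
Unset Strict Implicit.
Unset Printing Implicit Defensive.

Import Order.TTheory GRing.Theory Num.Theory.
Local Open Scope classical_set_scope.
Local Open Scope ring_scope.
Local Open Scope ereal_scope.
Local Open Scope quotient_scope.

Section MetCH.
Context {R : realType}.

(* A (not necessarily symmetric) metric with values in [0, +oo]. *)
Definition is_metric {T : Type} (d : T -> T -> \bar R) : Prop :=
  [/\ forall x y, 0 <= d x y,
      forall x, d x x = 0 &
      forall x y z, d x z <= d x y + d y z].

Definition is_separated {T : Type} (d : T -> T -> \bar R) : Prop :=
  forall x y, d x y = 0 -> d y x = 0 -> x = y.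

(* continuity of d : T x T -> [0,oo] for the upper topology on [0,oo]:
   preimages of the sets ]u, oo] are open *)
Definition upper_continuous {T : topologicalType} (d : T -> T -> \bar R) : Prop :=
  forall u : \bar R, open [set p : T * T | u < d p.1 p.2].

Definition MetCH_sep {T : topologicalType} (d : T -> T -> \bar R) : Prop :=
  [/\ compact [set: T], hausdorff_space T, is_metric d, is_separated d &
      upper_continuous d].

Definition is_morphism {S T : topologicalType} (dS : S -> S -> \bar R)
  (dT : T -> T -> \bar R) (g : S -> T) : Prop :=
  continuous g /\ forall x y, dT (g x) (g y) <= dS x y.

Definition is_embedding {S T : topologicalType} (dS : S -> S -> \bar R)
  (dT : T -> T -> \bar R) (g : S -> T) : Prop :=
  [/\ injective g, is_morphism dS dT g & forall x y, dT (g x) (g y) = dS x y].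

Definition is_submetric {Z : topologicalType} (d gamma : Z -> Z -> \bar R) : Prop :=
  [/\ is_metric gamma, upper_continuous gamma & forall z w, gamma z w <= d z w].

Definition is_pushout {A B X P : topologicalType}
  (dA : A -> A -> \bar R) (dB : B -> B -> \bar R) (dX : X -> X -> \bar R)
  (dP : P -> P -> \bar R) (f : A -> B) (i : A -> X) (jB : B -> P) (jX : X -> P)
  : Prop :=
  [/\ MetCH_sep dP, is_morphism dB dP jB, is_morphism dX dP jX,
      jB \o f = jX \o i &
      forall (Z : topologicalType) (dZ : Z -> Z -> \bar R), MetCH_sep dZ ->
      forall (g : B -> Z) (h : X -> Z),
        is_morphism dB dZ g -> is_morphism dX dZ h -> g \o f = h \o i ->
        exists! u : P -> Z, [/\ is_morphism dP dZ u, u \o jB = g & u \o jX = h]].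

End MetCH.

Definition sumT (B X : Type) : Type := (B + X)%type.

Section SumTopology.
Context {B X : topologicalType}.

HB.instance Definition _ := Choice.copy (sumT B X) (B + X)%type.

Definition sum_open (U : set (sumT B X)) : Prop :=
  open (@inl B X @^-1` U) /\ open (@inr B X @^-1` U).

Lemma sum_openT : sum_open setT.
Proof. by split; rewrite preimage_setT; exact: openT. Qed.

Lemma sum_openI : setI_closed sum_open.
Proof.
move=> U V [U1 U2] [V1 V2]; split; rewrite preimage_setI; exact: openI.
Qed.

Lemma sum_open_bigU (I : Type) (F : I -> set (sumT B X)) :
  (forall k, sum_open (F k)) -> sum_open (\bigcup_k F k).
Proof.
move=> oF; split; rewrite preimage_bigcup; apply: bigcup_open => k _;
  by case: (oF k).
Qed.

HB.instance Definition _ :=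
  isOpenTopological.Build (sumT B X) sum_openT sum_openI sum_open_bigU.

End SumTopology.

Section Gluing.
Context {R : realType}.
Local Open Scope ereal_scope.
Local Open Scope quotient_scope.

Definition sum_dist {B X : Type} (dB : B -> B -> \bar R) (dX : X -> X -> \bar R)
  (z w : sumT B X) : \bar R :=
  match z, w with
  | inl b, inl b' => dB b b'
  | inr x, inr x' => dX x x'
  | _, _ => +oo
  end.

Definition glue_dist {A B X : Type} (dB : B -> B -> \bar R) (dX : X -> X -> \bar R)
  (i : A -> X) (f : A -> B) (z w : sumT B X) : \bar R :=
  match z, w with
  | inl b, inl b' => dB b b'
  | inr x, inr x' =>
      Order.min (dX x x')
        (ereal_inf (range (fun p : A * A =>
           dX x (i p.1) + dB (f p.1) (f p.2) + dX (i p.2) x')))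
  | inl b, inr x => ereal_inf (range (fun a : A => dB b (f a) + dX (i a) x))
  | inr x, inl b => ereal_inf (range (fun a : A => dX x (i a) + dB (f a) b))
  end.

Section Quot.
Context {Z : topologicalType} (gamma : Z -> Z -> \bar R) (H : is_metric gamma).

Definition gamma_rel : rel Z :=
  fun z w => `[< gamma z w = 0 /\ gamma w z = 0 >].

Lemma gamma_rel_refl : reflexive gamma_rel.
Proof. by move=> z; apply/asboolP; case: H => _ h0 _; rewrite h0. Qed.

Lemma gamma_rel_sym : symmetric gamma_rel.
Proof.
by move=> z w; apply/asboolP/asboolP => -[h1 h2].
Qed.

Lemma gamma_rel_trans : transitive gamma_rel.
Proof.
case: H => hpos _ htri y x z /asboolP [h1 h2] /asboolP [h3 h4].
apply/asboolP; split; apply/eqP; rewrite eq_le hpos andbT.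
- by have := htri x y z; rewrite h1 h3 adde0.
- by have := htri z y x; rewrite h4 h2 adde0.
Qed.

Definition gamma_equiv : equiv_rel Z :=
  EquivRel gamma_rel gamma_rel_refl gamma_rel_sym gamma_rel_trans.

Definition gquot : topologicalType :=
  quotient_topology {eq_quot gamma_equiv}.

Definition gquot_dist (q q' : gquot) : \bar R := gamma (repr q) (repr q').

Definition gquot_proj : Z -> gquot := \pi_gquot.

End Quot.
End Gluing.

Arguments gquot {R Z gamma} H.
Arguments gquot_dist {R Z gamma} H q q'.
Arguments gquot_proj {R Z gamma} H z.

From HB Require Import structures.
From mathcomp Require Import all_boot all_order all_algebra.
From mathcomp Require Import generic_quotient.
From mathcomp Require Import all_classical all_reals all_analysis.
From mathcomp Require Import lra.

Unset Printing Implicit Defensive.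
Import Order.TTheory GRing.Theory Num.Theory.
Local Open Scope classical_set_scope.
Local Open Scope ring_scope.
Local Open Scope ereal_scope.

(* The triangle inequality for [glue_dist] is a case analysis in which every
   infimum is bounded through explicit witnesses; the one input beyond the
   triangle inequalities of [dB] and [dX] is
   [dB (f a) (f a') <= dX (i a) (i a')], i.e. that [f] is non-expansive and
   [i] isometric.  Upper continuity of [glue_dist] means lower semicontinuity
   on each pair of summands, and it holds because an infimum over the compact
   space [A] (or [A * A]) of a jointly lower semicontinuous function is lower
   semicontinuous.  On the compact Hausdorff space [B + X] the relation
   [gamma z w = 0 = gamma w z] is therefore closed, and normality separates
   two points that are not related by a closed saturated relation [F] by
   saturated open sets; applied to that relation and to [gamma <= u] this
   makes the quotient Hausdorff and its metric upper continuous.  Finally a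
   cocone [(g, h)] copairs to a map on [B + X] that is non-expansive for
   [glue_dist], because every term of [glue_dist] is the length of a path
   whose jumps between [f a] and [i a] are invisible to [g] and [h]; such a
   map factors uniquely through the quotient. *)

Section ereal_order.
Context {R : realType}.
Implicit Types (x y : \bar R) (a : R).

Lemma lte_fin_between a x : a%:E < x -> exists2 b : R, (a < b)%R & b%:E < x.
Proof.
case: x => [r| |] //= ar; last by exists (a + 1)%R; rewrite ?ltey // ltrDl.
by exists ((a + r) / 2)%R; rewrite -?lte_fin; have [] := midf_lt ar.
Qed.

Lemma lte_fin_splitD {a x y} : 0 <= x -> 0 <= y -> a%:E < x + y ->
  exists a1 a2 : R, [/\ a1%:E < x, a2%:E < y & a = (a1 + a2)%R].
Proof.
case: x => [r| |]; case: y => [s| |] //; rewrite ?lee_fin => x0 y0.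
- rewrite -EFinD lte_fin => ars.
  by exists (r - (r + s - a) / 2)%R, (s - (r + s - a) / 2)%R;
    rewrite !lte_fin; split; lra.
- by move=> _; exists (-1)%R, (a + 1)%R; rewrite ltey lte_fin; split => //; lra.
- by move=> _; exists (a + 1)%R, (-1)%R; rewrite ltey lte_fin; split => //; lra.
- by move=> _; exists (-1)%R, (a + 1)%R; rewrite !ltey; split => //; lra.
Qed.

Lemma ereal_inf_range_le {T : Type} (F : T -> \bar R) t : ereal_inf (range F) <= F t.
Proof. exact/ereal_inf_lbound/imageT. Qed.

Lemma le_ereal_inf_rangeDr {T : Type} (F : T -> \bar R) (y c : \bar R) :
  (forall t, 0 <= F t) -> 0 <= y -> (forall t, c <= F t + y) ->
  c <= ereal_inf (range F) + y.
Proof.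
move=> F0; have inf0 : 0 <= ereal_inf (range F) by apply/ereal_infP => _ [t _ <-].
case: y => [r| |] // y0 cF.
  by rewrite -leeBlDr //; apply/ereal_infP => _ [t _ <-]; rewrite leeBlDr.
by rewrite addey ?leey // gt_eqF // (lt_le_trans _ inf0) ?ltNy0.
Qed.

Lemma le_ereal_inf_rangeD {S T : Type} (F : S -> \bar R) (G : T -> \bar R) c :
  (forall s, 0 <= F s) -> (forall t, 0 <= G t) ->
  (forall s t, c <= F s + G t) -> c <= ereal_inf (range F) + ereal_inf (range G).
Proof.
move=> F0 G0 cFG; apply: le_ereal_inf_rangeDr => [//||s].
- by apply/ereal_infP => _ [t _ <-].
- by rewrite addeC; apply: le_ereal_inf_rangeDr => // t; rewrite addeC.
Qed.

Lemma le_mineDl (p q t c : \bar R) :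
  c <= p + t -> c <= q + t -> c <= Order.min p q + t.
Proof. by rewrite /Order.min; case: ifP. Qed.

Lemma le_mineDr (p q t c : \bar R) :
  c <= t + p -> c <= t + q -> c <= t + Order.min p q.
Proof. by rewrite /Order.min; case: ifP. Qed.

End ereal_order.

Lemma continuous_fst {S T : topologicalType} : continuous (@fst S T).
Proof. by move=> ?; exact: cvg_fst. Qed.

Lemma continuous_snd {S T : topologicalType} : continuous (@snd S T).
Proof. by move=> ?; exact: cvg_snd. Qed.

Lemma continuousT_comp {S T U : topologicalType} (p : S -> T) (q : T -> U) :
  continuous p -> continuous q -> continuous (q \o p).
Proof. by move=> cp cq x; apply: continuous_comp; [exact: cp|exact: cq]. Qed.

Lemma near_prod_image {Y1 Y2 S1 S2 : topologicalType} (p1 : Y1 -> S1)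
    (p2 : Y2 -> S2) (P : S1 * S2 -> Prop) (y1 : Y1) (y2 : Y2) :
  (forall U, nbhs y1 U -> nbhs (p1 y1) (p1 @` U)) ->
  (forall V, nbhs y2 V -> nbhs (p2 y2) (p2 @` V)) ->
  nbhs ((y1, y2) : Y1 * Y2) (fun q => P (p1 q.1, p2 q.2)) ->
  nbhs ((p1 y1, p2 y2) : S1 * S2) P.
Proof.
move=> p1U p2V [[U V] [Uy1 Vy2] UVP].
exists (p1 @` U, p2 @` V); first by split; [exact: p1U|exact: p2V].
by move=> [s t] /= [[u Uu <-] [v Vv <-]]; exact: (UVP (u, v)).
Qed.

Lemma continuous_closed_preimage {S T : topologicalType} {p : S -> T} {D : set T} :
  continuous p -> closed D -> closed (p @^-1` D).
Proof. by move=> cp; apply: preimage_closed => x _; exact: cp. Qed.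

Lemma near_forall_compact {Y K : topologicalType} (P : Y -> K -> Prop) (y : Y) :
  compact [set: K] ->
  (forall k, \forall p \near ((y, k) : Y * K), P p.1 p.2) ->
  \forall y' \near y, forall k, P y' k.
Proof.
move=> /compact_near_coveringP cK Pnear.
have : \forall y' \near y, [set: K] `<=` P y'.
  apply: (cK Y (nbhs y) P) => // k _.
  have [[U V] /= [Uy Vk] UVP] := Pnear k.
  by exists (V, U) => // -[k' y'] /= [Vk' Uy']; exact: (UVP (y', k')).
by apply: filterS => y' + k; apply.
Qed.

Lemma closed_proj_compact {Y K : topologicalType} (C : set (Y * K)) :
  compact [set: K] -> closed C -> closed [set y | exists k, C (y, k)].
Proof.
move=> cK cC; rewrite -[X in closed X]setCK closedC openE => y /= nCy.
have : \forall y' \near y, forall k, ~ C (y', k).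
  apply: near_forall_compact => // k.
  have : nbhs (y, k) (~` C).
    apply: open_nbhs_nbhs; split; first exact: closed_openC.
    by move=> Cyk; apply: nCy; exists k.
  by apply: filterS => -[].
by apply: filterS => y' nC [k]; exact: nC.
Qed.

Section lower_semicontinuous.
Context {R : realType}.

Lemma lower_semicontinuous_nearP {T : topologicalType} (f : T -> \bar R) :
  lower_semicontinuous f <->
  forall x (a : R), a%:E < f x -> \forall y \near x, a%:E < f y.
Proof.
split=> [lf x a /lf [V Vx Vf]|nf x a /nf fx]; first exact: filterS Vx.
by exists [set y | a%:E < f y].
Qed.

Lemma upper_continuous_lsc {T : topologicalType} (d : T -> T -> \bar R) :
  upper_continuous d <-> lower_semicontinuous (fun p : T * T => d p.1 p.2).
Proof.
rewrite lower_semicontinuousP; split=> [ud a|ud]; first exact: ud.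
case=> [a| |]; first exact: ud.
  rewrite (_ : [set _ | _] = set0); first exact: open0.
  by apply/seteqP; split=> p //=; rewrite ltNge leey.
rewrite (_ : [set _ | _] = \bigcup_(a : R) [set p | a%:E < d p.1 p.2]).
  by apply: bigcup_open => a _; exact: ud.
apply/seteqP; split=> [p /=|p [a _ /=]]; last exact: lt_trans (ltNyr a).
move=> dp; suff [a ad] : exists a : R, a%:E < d p.1 p.2 by exists a.
case: (d p.1 p.2) dp => [r _|_|//]; last by exists 0%R; rewrite ltey.
by exists (r - 1)%R; rewrite lte_fin ltrBlDr ltrDl.
Qed.

Lemma lower_semicontinuousD {T : topologicalType} (f g : T -> \bar R) :
  (forall x, 0 <= f x) -> (forall x, 0 <= g x) ->
  lower_semicontinuous f -> lower_semicontinuous g ->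
  lower_semicontinuous (fun x => f x + g x).
Proof.
move=> f0 g0 /lower_semicontinuous_nearP lf /lower_semicontinuous_nearP lg.
apply/lower_semicontinuous_nearP => x a afg.
have [a1 [a2 [a1f a2g ->]]] := lte_fin_splitD (f0 x) (g0 x) afg.
near=> y; rewrite EFinD; apply: lteD; near: y; [exact: lf|exact: lg].
Unshelve. all: by end_near. Qed.

Lemma lower_semicontinuous_min {T : topologicalType} (f g : T -> \bar R) :
  lower_semicontinuous f -> lower_semicontinuous g ->
  lower_semicontinuous (fun x => Order.min (f x) (g x)).
Proof.
move=> /lower_semicontinuous_nearP lf /lower_semicontinuous_nearP lg.
apply/lower_semicontinuous_nearP => x a; rewrite lt_min => /andP[af ag].
near=> y; rewrite lt_min; apply/andP; split; near: y; [exact: lf|exact: lg].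
Unshelve. all: by end_near. Qed.

Lemma lower_semicontinuous_comp {S T : topologicalType} (f : T -> \bar R)
    (p : S -> T) :
  lower_semicontinuous f -> continuous p -> lower_semicontinuous (f \o p).
Proof.
move=> /lower_semicontinuous_nearP lf cp.
by apply/lower_semicontinuous_nearP => x a /lf; exact: cp.
Qed.

Lemma lower_semicontinuous_inf {Y K : topologicalType} (F : Y -> K -> \bar R) :
  compact [set: K] -> lower_semicontinuous (fun p : Y * K => F p.1 p.2) ->
  lower_semicontinuous (fun y => ereal_inf (range (F y))).
Proof.
move=> cK /lower_semicontinuous_nearP lF.
apply/lower_semicontinuous_nearP => y a /lte_fin_between [b ab bF].
have : \forall y' \near y, forall k, b%:E < F y' k.
  apply: near_forall_compact => // k; apply: (lF (y, k)).
  by apply: lt_le_trans bF _; apply: ereal_inf_lbound; exists k.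
apply: filterS => y' bF'; apply: lt_le_trans (_ : b%:E <= _).
  by rewrite lte_fin.
by apply/ereal_infP => _ [k _ <-]; exact/ltW.
Qed.

Lemma lower_semicontinuous_dist {S T : topologicalType}
    (d : T -> T -> \bar R) (u v : S -> T) :
  upper_continuous d -> continuous u -> continuous v ->
  lower_semicontinuous (fun s => d (u s) (v s)).
Proof.
move=> /upper_continuous_lsc ld cu cv.
apply: (lower_semicontinuous_comp _ (fun s => (u s, v s)) ld) => s.
exact: cvg_pair (cu s) (cv s).
Qed.

End lower_semicontinuous.

Definition saturated {Z : Type} (E : Z -> Z -> Prop) (U : set Z) :=
  forall s t, E s t -> U s -> U t.

Section closed_equivalence.
Context {Z : topologicalType} {E : Z -> Z -> Prop}.
Hypotheses (cZ : compact [set: Z]) (hZ : hausdorff_space Z)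
  (E_refl : forall s, E s s) (E_sym : forall {s t}, E s t -> E t s)
  (E_trans : forall {s t r}, E s t -> E t r -> E s r)
  (cE : closed [set p : Z * Z | E p.1 p.2]).

Lemma closed_saturation (D : set Z) : closed D ->
  closed [set s | exists t, E s t /\ D t].
Proof.
move=> cD; apply: (closed_proj_compact [set p | E p.1 p.2 /\ D p.2]) => //.
exact: closedI cE (continuous_closed_preimage continuous_snd cD).
Qed.

Lemma closed_class (w : Z) : closed [set t | E t w].
Proof.
apply: (continuous_closed_preimage (p := fun t => (t, w)) _ cE) => t.
by apply: cvg_pair; [exact: cvg_id|exact: cvg_cst].
Qed.

Lemma saturated_open_separation {F : set (Z * Z)} {z w : Z} : closed F ->
  (forall s s' t t', E s s' -> E t t' -> F (s, t) -> F (s', t')) -> ~ F (z, w) ->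
  exists U V, [/\ open U, open V, saturated E U, saturated E V &
    [/\ U z, V w & forall s t, U s -> V t -> ~ F (s, t)]].
Proof.
move=> cF sF nFzw.
pose P := [set s | exists t, E t w /\ F (s, t)].
have cP : closed P.
  apply: (closed_proj_compact [set p | E p.2 w /\ F p]) => //.
  exact: closedI (continuous_closed_preimage continuous_snd (closed_class w)) cF.
have classz_nP : set_nbhs [set s | E s z] (~` P).
  move=> s Esz; apply: open_nbhs_nbhs; split; first exact: closed_openC.
  by case=> t [Etw Fst]; apply: nFzw; exact: (sF s z t w Esz Etw Fst).
have [C Cz clCP] := compact_normal hZ cZ (closed_class z) classz_nP.
(* [U] is the largest saturated subset of the interior of [C], and [V] the set
   of points that no point of [closure C] is [F]-related to. *)
exists (~` [set s | exists t, E s t /\ ~ C° t]).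
exists (~` [set t | exists s, closure C s /\ F (s, t)]); split.
- apply/closed_openC/closed_saturation/open_closedC; exact: open_interior.
- apply/closed_openC.
  apply: (closed_proj_compact [set p | closure C p.2 /\ F (p.2, p.1)]) => //.
  apply: closedI (continuous_closed_preimage continuous_snd (@closed_closure _ C)) _.
  exact: continuous_closed_preimage swap_continuous cF.
- move=> s s' Ess' nCs [t [Es't nCt]]; apply: nCs.
  by exists t; split => //; exact: E_trans Ess' Es't.
- move=> t t' Ett' nFt [s [Cs Fst']]; apply: nFt.
  by exists s; split => //; exact: (sF s s t' t (E_refl s) (E_sym Ett') Fst').
split.
- by case=> t [Ezt]; apply; exact: Cz _ (E_sym Ezt).
- by case=> s [Cs Fsw]; apply: (clCP s Cs); exists w.
- move=> s t nCs nFt Fst; apply: nFt; exists s; split => //.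
  apply: subset_closure; apply: interior_subset.
  by apply: contra_notP nCs => nCs; exists s; split; [exact: E_refl|].
Qed.

End closed_equivalence.

Definition sum_copair {B X Z : Type} (g : B -> Z) (h : X -> Z) (z : sumT B X) : Z :=
  match z with inl b => g b | inr x => h x end.

Section sum_topology.
Context {B X : topologicalType}.

Lemma continuous_inl : continuous (@inl B X : B -> sumT B X).
Proof. by apply/continuousP => U []. Qed.

Lemma continuous_inr : continuous (@inr B X : X -> sumT B X).
Proof. by apply/continuousP => U []. Qed.

Lemma open_inl_image (U : set B) : open U -> open (inl @` U : set (sumT B X)).
Proof.
move=> oU; split.
  have -> : inl @^-1` (inl @` U : set (sumT B X)) = U.
    by apply/seteqP; split=> [b [? ? [<-]]|b] //; exists b.
  exact: oU.
have -> : inr @^-1` (inl @` U : set (sumT B X)) = set0.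
  by apply/seteqP; split=> // x [].
exact: open0.
Qed.

Lemma open_inr_image (U : set X) : open U -> open (inr @` U : set (sumT B X)).
Proof.
move=> oU; split.
  have -> : inl @^-1` (inr @` U : set (sumT B X)) = set0.
    by apply/seteqP; split=> // b [].
  exact: open0.
have -> : inr @^-1` (inr @` U : set (sumT B X)) = U.
  by apply/seteqP; split=> [x [? ? [<-]]|x] //; exists x.
exact: oU.
Qed.

Lemma nbhs_inl_image {b : B} {U : set B} :
  nbhs b U -> nbhs (inl b : sumT B X) (inl @` U).
Proof.
rewrite !nbhsE => -[V [oV Vb] VU]; exists (inl @` V); last exact: image_subset.
by split; [exact: open_inl_image|exists b].
Qed.

Lemma nbhs_inr_image {x : X} {U : set X} :
  nbhs x U -> nbhs (inr x : sumT B X) (inr @` U).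
Proof.
rewrite !nbhsE => -[V [oV Vx] VU]; exists (inr @` V); last exact: image_subset.
by split; [exact: open_inr_image|exists x].
Qed.

Lemma continuous_sum_copair {Z : topologicalType} {g : B -> Z} {h : X -> Z} :
  continuous g -> continuous h -> continuous (sum_copair g h).
Proof.
move=> /continuousP cg /continuousP ch.
by apply/continuousP => O oO; split; [exact: cg|exact: ch].
Qed.

Lemma compact_sumT : compact [set: B] -> compact [set: X] ->
  compact [set: sumT B X].
Proof.
move=> cB cX; rewrite (_ : setT = inl @` setT `|` inr @` setT).
  apply: compactU; apply: continuous_compact => //; apply: continuous_subspaceT.
    exact: continuous_inl.
  exact: continuous_inr.
by apply/seteqP; split=> // -[b|x] _; [left; exists b|right; exists x].
Qed.

Lemma hausdorff_sumT : hausdorff_space B -> hausdorff_space X ->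
  hausdorff_space (sumT B X).
Proof.
move=> hB hX [b|x] [b'|x'] cl.
- congr inl; apply: hB => U V /nbhs_inl_image Ub /nbhs_inl_image Vb'.
  have [_ [[u Uu <-] [v Vv [uv]]]] := cl _ _ Ub Vb'.
  by exists u; split; last rewrite -uv.
- by have [_ [[? _ <-] [? _]]] :=
    cl (inl @` setT) (inr @` setT) (nbhs_inl_image filterT) (nbhs_inr_image filterT).
- by have [_ [[? _ <-] [? _]]] :=
    cl (inr @` setT) (inl @` setT) (nbhs_inr_image filterT) (nbhs_inl_image filterT).
- congr inr; apply: hX => U V /nbhs_inr_image Ux /nbhs_inr_image Vx'.
  have [_ [[u Uu <-] [v Vv [uv]]]] := cl _ _ Ux Vx'.
  by exists u; split; last rewrite -uv.
Qed.

End sum_topology.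

Section glue_metric.
Context {R : realType} {A B X : Type}.
Variables (dB : B -> B -> \bar R) (dX : X -> X -> \bar R) (i : A -> X) (f : A -> B).
Hypotheses (mB : is_metric dB) (mX : is_metric dX)
  (fi_le : forall a a', dB (f a) (f a') <= dX (i a) (i a')).

Local Notation gamma := (glue_dist dB dX i f).

Let dB_ge0 b b' : 0 <= dB b b'. Proof. by case: mB. Qed.
Let dX_ge0 x x' : 0 <= dX x x'. Proof. by case: mX. Qed.
Let dBtri b b1 b2 : dB b b2 <= dB b b1 + dB b1 b2. Proof. by case: mB. Qed.
Let dXtri x x1 x2 : dX x x2 <= dX x x1 + dX x1 x2. Proof. by case: mX. Qed.

Let BX_ge0 b x a : 0 <= dB b (f a) + dX (i a) x.
Proof. exact: adde_ge0. Qed.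
Let XB_ge0 x b a : 0 <= dX x (i a) + dB (f a) b.
Proof. exact: adde_ge0. Qed.
Let XX_ge0 x x' (p : A * A) :
  0 <= dX x (i p.1) + dB (f p.1) (f p.2) + dX (i p.2) x'.
Proof. by rewrite !adde_ge0. Qed.

Let dB_le_detour a x a' : dB (f a) (f a') <= dX (i a) x + dX x (i a').
Proof. exact: le_trans (fi_le a a') (dXtri _ _ _). Qed.

Lemma glue_dist_ge0 z w : 0 <= gamma z w.
Proof.
case: z w => [b|x] [b'|x'] /=; rewrite ?le_min ?dX_ge0 //;
  by apply/ereal_infP => _ [? _ <-].
Qed.

Lemma glue_dist_refl z : gamma z z = 0.
Proof.
case: z => [b|x] /=; first by case: mB.
have -> : dX x x = 0 by case: mX.
by apply/min_idPl; apply/ereal_infP => _ [? _ <-].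
Qed.

Lemma glue_dist_le_sum_dist z w : gamma z w <= sum_dist dB dX z w.
Proof. by case: z w => [b|x] [b'|x'] //=; rewrite ?leey // ge_min lexx. Qed.

Lemma glue_dist_triangle_inl z b1 w :
  gamma z w <= gamma z (inl b1) + gamma (inl b1) w.
Proof.
case: z w => [b|x] [b2|x2] /=.
- exact: dBtri.
- rewrite [leRHS]addeC; apply: le_ereal_inf_rangeDr => // a.
  apply: le_trans (ereal_inf_range_le _ a) _ => /=.
  by rewrite addeAC; apply: leeD2r; rewrite addeC.
- apply: le_ereal_inf_rangeDr => // a.
  apply: le_trans (ereal_inf_range_le _ a) _ => /=.
  by rewrite -addeA; apply: leeD2l.
- rewrite ge_min; apply/orP; right; apply: le_ereal_inf_rangeD => // a a'.
  apply: le_trans (ereal_inf_range_le _ (a, a')) _ => /=.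
  by rewrite addeA; apply: leeD2r; rewrite -addeA; apply: leeD2l.
Qed.

Lemma glue_dist_triangle_inr z x1 w :
  gamma z w <= gamma z (inr x1) + gamma (inr x1) w.
Proof.
case: z w => [b|x] [b2|x2] /=.
- apply: le_ereal_inf_rangeD => // a a'.
  apply: le_trans (dBtri b (f a) b2) _; rewrite -addeA; apply: leeD2l.
  apply: le_trans (dBtri _ (f a') _) _; rewrite addeA; apply: leeD2r.
  exact: dB_le_detour.
- apply: le_mineDr.
    apply: le_ereal_inf_rangeDr => // a.
    apply: le_trans (ereal_inf_range_le _ a) _ => /=.
    by rewrite -addeA; apply: leeD2l.
  apply: le_ereal_inf_rangeD => // a [a1 a2].
  apply: le_trans (ereal_inf_range_le _ a2) _ => /=.
  rewrite addeA; apply: leeD2r; apply: le_trans (dBtri b (f a) _) _.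
  rewrite -addeA; apply: leeD2l; apply: le_trans (dBtri _ (f a1) _) _.
  by rewrite addeA; apply: leeD2r; exact: dB_le_detour.
- apply: le_mineDl.
    rewrite [leRHS]addeC; apply: le_ereal_inf_rangeDr => // a.
    apply: le_trans (ereal_inf_range_le _ a) _ => /=.
    by rewrite addeAC; apply: leeD2r; rewrite addeC.
  apply: le_ereal_inf_rangeD => // -[a1 a2] a.
  apply: le_trans (ereal_inf_range_le _ a1) _ => /=.
  rewrite -!addeA; apply: leeD2l; apply: le_trans (dBtri _ (f a2) _) _.
  apply: leeD2l; apply: le_trans (dBtri _ (f a) _) _.
  by rewrite addeA; apply: leeD2r; exact: dB_le_detour.
- apply: le_mineDl; apply: le_mineDr.
  + by rewrite ge_min dXtri.
  + rewrite [leRHS]addeC ge_min; apply/orP; right.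
    apply: le_ereal_inf_rangeDr => // -[a1 a2].
    apply: le_trans (ereal_inf_range_le _ (a1, a2)) _ => /=.
    rewrite [leRHS]addeAC; apply: leeD2r; rewrite [leRHS]addeAC; apply: leeD2r.
    by rewrite addeC.
  + rewrite ge_min; apply/orP; right.
    apply: le_ereal_inf_rangeDr => // -[a1 a2].
    apply: le_trans (ereal_inf_range_le _ (a1, a2)) _ => /=.
    by rewrite -[leRHS]addeA; apply: leeD2l.
  + rewrite ge_min; apply/orP; right.
    apply: le_ereal_inf_rangeD => // -[a1 a2] [a3 a4].
    apply: le_trans (ereal_inf_range_le _ (a1, a4)) _ => /=.
    rewrite [leRHS]addeA; apply: leeD2r; rewrite -!addeA; apply: leeD2l.
    apply: le_trans (dBtri _ (f a2) _) _; apply: leeD2l.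
    apply: le_trans (dBtri _ (f a3) _) _; rewrite addeA; apply: leeD2r.
    exact: dB_le_detour.
Qed.

Lemma glue_dist_metric : is_metric gamma.
Proof.
split; [exact: glue_dist_ge0|exact: glue_dist_refl|].
by move=> z [b1|x1] w; [exact: glue_dist_triangle_inl|exact: glue_dist_triangle_inr].
Qed.

End glue_metric.

Section glue_upper_continuous.
Context {R : realType} {A B X : topologicalType}.
Variables (dB : B -> B -> \bar R) (dX : X -> X -> \bar R) (i : A -> X) (f : A -> B).
Hypotheses (dB_ge0 : forall b b', 0 <= dB b b') (dX_ge0 : forall x x', 0 <= dX x x')
  (uB : upper_continuous dB) (uX : upper_continuous dX)
  (ci : continuous i) (cf : continuous f) (cA : compact [set: A]).

Let lsc_BX : lower_semicontinuous (fun q : B * X =>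
  ereal_inf (range (fun a => dB q.1 (f a) + dX (i a) q.2))).
Proof.
apply: (lower_semicontinuous_inf (fun q a => dB q.1 (f a) + dX (i a) q.2)) => //.
apply: lower_semicontinuousD => [p|p||]; [exact: dB_ge0|exact: dX_ge0| |].
  apply: (lower_semicontinuous_dist dB (fst \o fst) (f \o snd)) => //.
    exact: continuousT_comp continuous_fst continuous_fst.
  exact: continuousT_comp continuous_snd cf.
apply: (lower_semicontinuous_dist dX (i \o snd) (snd \o fst)) => //.
  exact: continuousT_comp continuous_snd ci.
exact: continuousT_comp continuous_fst continuous_snd.
Qed.

Let lsc_XB : lower_semicontinuous (fun q : X * B =>
  ereal_inf (range (fun a => dX q.1 (i a) + dB (f a) q.2))).
Proof.
apply: (lower_semicontinuous_inf (fun q a => dX q.1 (i a) + dB (f a) q.2)) => //.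
apply: lower_semicontinuousD => [p|p||]; [exact: dX_ge0|exact: dB_ge0| |].
  apply: (lower_semicontinuous_dist dX (fst \o fst) (i \o snd)) => //.
    exact: continuousT_comp continuous_fst continuous_fst.
  exact: continuousT_comp continuous_snd ci.
apply: (lower_semicontinuous_dist dB (f \o snd) (snd \o fst)) => //.
  exact: continuousT_comp continuous_snd cf.
exact: continuousT_comp continuous_fst continuous_snd.
Qed.

Let lsc_XX : lower_semicontinuous (fun q : X * X =>
  Order.min (dX q.1 q.2) (ereal_inf (range (fun p : A * A =>
    dX q.1 (i p.1) + dB (f p.1) (f p.2) + dX (i p.2) q.2)))).
Proof.
apply: lower_semicontinuous_min; first exact/upper_continuous_lsc.
have cAA : compact [set: A * A] by rewrite -setXTT; exact: compact_setX.
apply: (lower_semicontinuous_inf (fun q p =>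
  dX q.1 (i p.1) + dB (f p.1) (f p.2) + dX (i p.2) q.2)) => //.
pose a1 := @fst A A \o @snd (X * X) (A * A).
pose a2 := @snd A A \o @snd (X * X) (A * A).
have ca1 : continuous a1 by exact: continuousT_comp continuous_snd continuous_fst.
have ca2 : continuous a2 by exact: continuousT_comp continuous_snd continuous_snd.
apply: lower_semicontinuousD => [p|p||]; [exact: adde_ge0|exact: dX_ge0| |].
  apply: lower_semicontinuousD => [p|p||]; [exact: dX_ge0|exact: dB_ge0| |].
    apply: (lower_semicontinuous_dist dX (fst \o fst) (i \o a1)) => //.
      exact: continuousT_comp continuous_fst continuous_fst.
    exact: continuousT_comp ca1 ci.
  apply: (lower_semicontinuous_dist dB (f \o a1) (f \o a2)) => //.
    exact: continuousT_comp ca1 cf.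
  exact: continuousT_comp ca2 cf.
apply: (lower_semicontinuous_dist dX (i \o a2) (snd \o fst)) => //.
  exact: continuousT_comp ca2 ci.
exact: continuousT_comp continuous_fst continuous_snd.
Qed.

Lemma glue_dist_upper_continuous : upper_continuous (glue_dist dB dX i f).
Proof.
have /upper_continuous_lsc/lower_semicontinuous_nearP lBB := uB.
have /lower_semicontinuous_nearP lBX := lsc_BX.
have /lower_semicontinuous_nearP lXB := lsc_XB.
have /lower_semicontinuous_nearP lXX := lsc_XX.
apply/upper_continuous_lsc/lower_semicontinuous_nearP => -[[b|x] [b'|x']] a /= ag;
  apply: (@near_prod_image _ _ (sumT B X) (sumT B X));
  do ?[exact: @nbhs_inl_image|exact: @nbhs_inr_image].
- exact: lBB (b, b') a ag.
- exact: lBX (b, x') a ag.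
- exact: lXB (x, b') a ag.
- exact: lXX (x, x') a ag.
Qed.

End glue_upper_continuous.

Section gamma_quotient.
Context {R : realType} {Z : topologicalType} {gamma : Z -> Z -> \bar R}.
Variable H : is_metric gamma.

Local Notation pr := (gquot_proj H).
Local Notation E := (fun s t => gamma s t = 0 /\ gamma t s = 0).

Let gamma_ge0 s t : 0 <= gamma s t. Proof. by case: H. Qed.
Let gamma_tri s t r : gamma s r <= gamma s t + gamma t r. Proof. by case: H. Qed.

Lemma gquot_proj_eqP s t : pr s = pr t <-> E s t.
Proof.
split=> [/eqquotP/asboolP //|Est].
by apply/eqquotP/asboolP.
Qed.

Lemma repr_gquot_proj_equiv z : E (repr (pr z)) z.
Proof. by apply/gquot_proj_eqP; rewrite /gquot_proj reprK. Qed.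

Lemma gamma_equiv_refl s : E s s.
Proof. by case: H => _ g0 _; rewrite g0. Qed.

Lemma gamma_equiv_sym {s t} : E s t -> E t s.
Proof. by case. Qed.

Lemma gamma_equiv_trans {s t r} : E s t -> E t r -> E s r.
Proof.
move=> [st ts] [tr rt]; split; apply/eqP; rewrite eq_le gamma_ge0 andbT.
  by have := gamma_tri s t r; rewrite st tr adde0.
by have := gamma_tri r t s; rewrite rt ts adde0.
Qed.

Lemma gamma_equiv_congr {s s' t t'} : E s s' -> E t t' -> gamma s t = gamma s' t'.
Proof.
move=> [ss' s's] [tt' t't]; apply/eqP; rewrite eq_le.
apply/andP; split.
  apply: le_trans (gamma_tri s s' t) _; rewrite ss' add0e.
  by apply: le_trans (gamma_tri s' t' t) _; rewrite t't adde0.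
apply: le_trans (gamma_tri s' s t') _; rewrite s's add0e.
by apply: le_trans (gamma_tri s t t') _; rewrite tt' adde0.
Qed.

Lemma gquot_dist_proj z w : gquot_dist H (pr z) (pr w) = gamma z w.
Proof.
exact: gamma_equiv_congr (repr_gquot_proj_equiv z) (repr_gquot_proj_equiv w).
Qed.

Lemma gquot_proj_epi {W : Type} (u v : gquot H -> W) : u \o pr = v \o pr -> u = v.
Proof.
move=> uv; apply/funext => q; rewrite -[q]reprK.
exact: (congr1 (@^~ (repr q)) uv).
Qed.

Lemma gquot_lift {W : topologicalType} {dW : W -> W -> \bar R} {k : Z -> W} :
  is_metric dW -> is_separated dW -> continuous k ->
  (forall s t, dW (k s) (k t) <= gamma s t) ->
  is_morphism (gquot_dist H) dW (k \o repr) /\ (k \o repr) \o pr = k.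
Proof.
move=> [dW_ge0 _ _] sW ck k_le.
have kE s t : E s t -> k s = k t.
  move=> [st ts]; apply: sW; apply/eqP; rewrite eq_le dW_ge0 andbT.
    by rewrite -st k_le.
  by rewrite -ts k_le.
split; [split|].
- by apply: repr_comp_continuous => // s t /eqP/gquot_proj_eqP/kE ->.
- by move=> q q'; exact: k_le.
- by apply/funext => z /=; apply: kE; exact: repr_gquot_proj_equiv.
Qed.

Section compact_hausdorff.
Hypotheses (cZ : compact [set: Z]) (hZ : hausdorff_space Z)
  (ug : upper_continuous gamma).

Lemma closed_gamma_le u : closed [set p : Z * Z | gamma p.1 p.2 <= u].
Proof.
have -> : [set p : Z * Z | gamma p.1 p.2 <= u] = ~` [set p | u < gamma p.1 p.2].
  by apply/seteqP; split=> p /=; rewrite leNgt => /negP.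
exact: open_closedC.
Qed.

Lemma closed_gamma_equiv : closed [set p : Z * Z | E p.1 p.2].
Proof.
have -> : [set p : Z * Z | E p.1 p.2] =
    [set p | gamma p.1 p.2 <= 0] `&` [set p | gamma p.2 p.1 <= 0].
  apply/seteqP; split=> p /= [st ts]; first by rewrite st ts.
  by split; apply/eqP; rewrite eq_le gamma_ge0 andbT.
apply: closedI; first exact: closed_gamma_le.
exact: continuous_closed_preimage swap_continuous (closed_gamma_le 0).
Qed.

Local Notation separation := (@saturated_open_separation _ _ cZ hZ
  gamma_equiv_refl (@gamma_equiv_sym) (@gamma_equiv_trans) closed_gamma_equiv _ _ _).

Lemma open_gquot_image (U : set Z) :
  open U -> saturated E U -> open (pr @` U : set (gquot H)).
Proof.
move=> oU sU; have preU : pr @^-1` (pr @` U) = U.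
  apply/seteqP; split=> [s [t Ut /gquot_proj_eqP Ets]|s Us]; last by exists s.
  exact: sU t s Ets Ut.
by rewrite -preU in oU.
Qed.

Lemma nbhs_gquot_image {U : set Z} {z : Z} :
  open U -> saturated E U -> U z -> nbhs (pr z) (pr @` U).
Proof.
move=> oU sU Uz; apply: open_nbhs_nbhs.
by split; [exact: open_gquot_image|exists z].
Qed.

Lemma gquot_compact : compact [set: gquot H].
Proof.
rewrite (_ : setT = pr @` setT).
  apply: continuous_compact => //; apply: continuous_subspaceT; exact: pi_continuous.
by apply/seteqP; split=> // q _; exists (repr q) => //; rewrite /gquot_proj reprK.
Qed.

Lemma gquot_hausdorff : hausdorff_space (gquot H).
Proof.
move=> q q'; rewrite -[q]reprK -[q']reprK => cl; apply/gquot_proj_eqP.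
apply: contrapT => nE.
have E_congr s s' t t' : E s s' -> E t t' -> E s t -> E s' t'.
  move=> ss' tt' st.
  exact: gamma_equiv_trans (gamma_equiv_trans (gamma_equiv_sym ss') st) tt'.
have [U [V [oU oV sU sV [Uq Vq' UV]]]] := separation closed_gamma_equiv E_congr nE.
have [_ [[s Us <-] [t Vt /gquot_proj_eqP ts]]] :=
  cl _ _ (nbhs_gquot_image oU sU Uq) (nbhs_gquot_image oV sV Vq').
by apply: (UV s s Us (sV t s ts Vt)); exact: gamma_equiv_refl.
Qed.

Lemma gquot_upper_continuous : upper_continuous (gquot_dist H).
Proof.
move=> u; rewrite openE => -[q q'] /=; rewrite ltNge => /negP nle.
have le_u_congr s s' t t' : E s s' -> E t t' -> gamma s t <= u -> gamma s' t' <= u.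
  by move=> ss' tt'; rewrite (gamma_equiv_congr ss' tt').
have [U [V [oU oV sU sV [Uq Vq' UV]]]] :=
  separation (closed_gamma_le u) le_u_congr nle.
exists (pr @` U, pr @` V).
  by rewrite -[q]reprK -[q']reprK; split; exact: nbhs_gquot_image.
move=> [p p'] /= [[s Us <-] [t Vt <-]].
by rewrite gquot_dist_proj ltNge; apply/negP; exact: UV.
Qed.

Lemma gquot_MetCH : MetCH_sep (gquot_dist H).
Proof.
split; [exact: gquot_compact|exact: gquot_hausdorff| |
  |exact: gquot_upper_continuous].
- by case: H => g0 g_refl g_tri; split=> *; rewrite /gquot_dist.
- move=> q q' qq' q'q; rewrite -[q]reprK -[q']reprK.
  exact/gquot_proj_eqP.
Qed.

End compact_hausdorff.
End gamma_quotient.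

Section glue_pushout.
Context {R : realType} {A B X : topologicalType}.
Variables (dB : B -> B -> \bar R) (dX : X -> X -> \bar R) (i : A -> X) (f : A -> B).
Hypotheses (mB : is_metric dB) (mX : is_metric dX).

Local Notation gamma := (glue_dist dB dX i f).

Lemma glue_dist_copair_le {W : topologicalType} {dW : W -> W -> \bar R}
    {g : B -> W} {h : X -> W} :
  is_metric dW -> (forall b b', dW (g b) (g b') <= dB b b') ->
  (forall x x', dW (h x) (h x') <= dX x x') -> g \o f = h \o i ->
  forall z w, dW (sum_copair g h z) (sum_copair g h w) <= gamma z w.
Proof.
move=> [_ _ tW] g_le h_le gh.
have gfhi a : g (f a) = h (i a) by rewrite -[LHS]/((g \o f) a) gh.
case=> [b|x] [b'|x'] /=.
- exact: g_le.
- apply/ereal_infP => _ [a _ <-]; apply: le_trans (tW _ (g (f a)) _) _.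
  by apply: leeD; [exact: g_le|rewrite gfhi; exact: h_le].
- apply/ereal_infP => _ [a _ <-]; apply: le_trans (tW _ (g (f a)) _) _.
  by apply: leeD; [rewrite gfhi; exact: h_le|exact: g_le].
- rewrite le_min h_le; apply/ereal_infP => _ [[a a'] _ <-] /=.
  apply: le_trans (tW _ (h (i a)) _) _; rewrite -addeA.
  apply: leeD; first exact: h_le.
  apply: le_trans (tW _ (h (i a')) _) _.
  by apply: leeD; [rewrite -!gfhi; exact: g_le|exact: h_le].
Qed.

Variable H : is_metric gamma.
Local Notation pr := (gquot_proj H).

Lemma glue_quotient_commutes : (pr \o inl) \o f = (pr \o inr) \o i.
Proof.
have [dB_ge0 dB0 _] := mB; have [dX_ge0 dX0 _] := mX.
apply/funext => a /=; apply/gquot_proj_eqP.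
split; apply/eqP; rewrite eq_le glue_dist_ge0 // andbT;
  by apply: le_trans (ereal_inf_range_le _ a) _; rewrite /= dB0 dX0 adde0.
Qed.

Lemma is_morphism_gquot_inl : is_morphism dB (gquot_dist H) (pr \o inl).
Proof.
split; first exact: continuousT_comp continuous_inl pi_continuous.
by move=> b b' /=; rewrite gquot_dist_proj.
Qed.

Lemma is_morphism_gquot_inr : is_morphism dX (gquot_dist H) (pr \o inr).
Proof.
split; first exact: continuousT_comp continuous_inr pi_continuous.
by move=> x x' /=; rewrite gquot_dist_proj ge_min lexx.
Qed.

Lemma gquot_glue_universal {W : topologicalType} (dW : W -> W -> \bar R) :
  MetCH_sep dW -> forall (g : B -> W) (h : X -> W),
  is_morphism dB dW g -> is_morphism dX dW h -> g \o f = h \o i ->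
  exists! u : gquot H -> W,
    [/\ is_morphism (gquot_dist H) dW u, u \o (pr \o inl) = g & u \o (pr \o inr) = h].
Proof.
move=> [_ _ mW sW _] g h [cg g_le] [ch h_le] gh.
have [u_mor u_pr] := gquot_lift H mW sW (continuous_sum_copair cg ch)
  (glue_dist_copair_le mW g_le h_le gh).
exists (sum_copair g h \o repr); split.
  split=> //; apply/funext => y.
    exact: (congr1 (@^~ (inl y)) u_pr).
  exact: (congr1 (@^~ (inr y)) u_pr).
move=> v [_ vB vX]; apply: gquot_proj_epi; rewrite u_pr.
by apply/funext => -[b|x] /=; [rewrite -vB|rewrite -vX].
Qed.

End glue_pushout.

Theorem proposition4p1 (R : realType) (A B X : topologicalType)
  (dA : A -> A -> \bar R) (dB : B -> B -> \bar R) (dX : X -> X -> \bar R)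
  (i : A -> X) (f : A -> B) :
  MetCH_sep dA -> MetCH_sep dB -> MetCH_sep dX ->
  is_embedding dA dX i -> is_morphism dA dB f ->
  is_submetric (sum_dist dB dX) (glue_dist dB dX i f) /\
  forall H : is_metric (glue_dist dB dX i f),
    is_pushout dA dB dX (gquot_dist H) f i
      (gquot_proj H \o (@inl B X : B -> sumT B X))
      (gquot_proj H \o (@inr B X : X -> sumT B X)).
Proof.
move=> [cA _ _ _ _] [cB hB mB _ uB] [cX hX mX _ uX] [_ [ci _] i_iso] [cf f_le].
have fi_le a a' : dB (f a) (f a') <= dX (i a) (i a') by rewrite i_iso.
have [dB_ge0 _ _] := mB; have [dX_ge0 _ _] := mX.
have uglue : upper_continuous (glue_dist dB dX i f).
  exact: glue_dist_upper_continuous.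
split.
  by split; [exact: glue_dist_metric|exact: uglue|exact: glue_dist_le_sum_dist].
move=> H; split.
- by apply: gquot_MetCH; [exact: compact_sumT|exact: hausdorff_sumT|].
- exact: is_morphism_gquot_inl.
- exact: is_morphism_gquot_inr.
- exact: glue_quotient_commutes.
- move=> W dW mW g h; exact: gquot_glue_universal.
Qed.
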